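(* Let $e\colon\mathbb{G}_1\times\mathbb{G}_1\to\mathbb{G}_2$ be a cryptographic pairing between groups of order $p$. Suppose the $(t,\epsilon)$-Computational Diffie-Hellman assumption holds in $\mathbb{G}_1$. Then $e$ is a $(t-O(1),\epsilon)$-one-way pairing.
   Context: A cryptographic pairing is a map $e\colon\mathbb{G}_1\times\mathbb{G}_1\to\mathbb{G}_2$ between cyclic groups of prime order $p$ that is bilinear ($e(x^a,y^b)=e(x,y)^{ab}$) and non-degenerate ($e(g,g)$ generates $\mathbb{G}_2$ whenever $g$ generates $\mathbb{G}_1$). The $(t,\epsilon)$-CDH assumption holds in $\mathbb{G}_1$ if there is no algorithm running in time at most $t$ that on input $(g,g^a,g^b)$ outputs $g^{ab}$ with probability at least $\epsilon$ over all choices of $(g,a,b)$. The pairing $e$ is a $(t,\epsilon)$-one-way pairing if for every algorithm $\mathcal{A}$ that takes as input $g\in\mathbb{G}_1$ and $x\in\mathbb{G}_2$, outputs an element of $\mathbb{G}_1$, and runs in time at most $t$, one has $\Pr[e(g,\mathcal{A}(g,x))=x]<\epsilon$, the probability over $g$ and $x$. *)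

From HB Require Import structures.
From mathcomp Require Import all_boot all_order all_algebra all_fingroup all_solvable.
Set Implicit Arguments. Unset Strict Implicit. Unset Printing Implicit Defensive.
Import Order.TTheory GRing.Theory Num.Theory.
Local Open Scope ring_scope.

Definition dret (R : realFieldType) (T : finType) (x : T) : {ffun T -> R} :=
  [ffun y => (y == x)%:R].
Definition dbind (R : realFieldType) (T U : finType)
    (d : {ffun T -> R}) (f : T -> {ffun U -> R}) : {ffun U -> R} :=
  [ffun u => \sum_t d t * f t u].
Definition dunif (R : realFieldType) (T : finType) : {ffun T -> R} :=
  [ffun _ => (#|T|%:R)^-1].

Definition pairing_bilinear (gT1 gT2 : finGroupType) (e : gT1 -> gT1 -> gT2) :=
  forall (x y : gT1) (a b : nat), e (x ^+ a)%g (y ^+ b)%g = (e x y ^+ (a * b))%g.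
Definition pairing_nondegenerate (gT1 gT2 : finGroupType) (e : gT1 -> gT1 -> gT2) :=
  forall g : gT1, generator [set: gT1] g -> generator [set: gT2] (e g g).

(** * An abstract model of (probabilistic) computation with running time. *)
Record comp_model (R : realFieldType) (gT1 gT2 : finGroupType) (p : nat)
    (e : gT1 -> gT1 -> gT2) := CompModel {
  alg : finType -> finType -> Type;
  run : forall (I O : finType), alg I O -> I -> {ffun O -> R};
  time : forall (I O : finType), alg I O -> nat;
  unit_cost : nat;
  run_ge0 : forall I O (A : alg I O) i o, 0 <= run A i o;
  run_sum1 : forall I O (A : alg I O) i, \sum_o run A i o = 1;
  comp_ex : forall (I J K : finType) (A : alg I J) (B : alg J K),
    exists C : alg I K, (time C <= time A + time B + unit_cost)%N /\
      forall i, run C i = dbind (run A i) (run B);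
  pair_ex : forall (I J K : finType) (A : alg I J) (B : alg I K),
    exists C : alg I (J * K)%type, (time C <= time A + time B + unit_cost)%N /\
      forall i, run C i =
        dbind (run A i) (fun j => dbind (run B i) (fun k => dret R (j, k)));
  fst_ex : forall (I J : finType), exists C : alg (I * J)%type I,
    (time C <= unit_cost)%N /\ forall x, run C x = dret R x.1;
  snd_ex : forall (I J : finType), exists C : alg (I * J)%type J,
    (time C <= unit_cost)%N /\ forall x, run C x = dret R x.2;
  samp_ex : forall (I : finType), exists C : alg I 'I_p,
    (time C <= unit_cost)%N /\ forall x, run C x = dunif R 'I_p;
  mul1_ex : exists C : alg (gT1 * gT1)%type gT1,
    (time C <= unit_cost)%N /\ forall x, run C x = dret R (x.1 * x.2)%g;
  inv1_ex : exists C : alg gT1 gT1,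
    (time C <= unit_cost)%N /\ forall x, run C x = dret R (x^-1)%g;
  exp1_ex : exists C : alg (gT1 * 'I_p)%type gT1,
    (time C <= unit_cost)%N /\ forall x, run C x = dret R (x.1 ^+ x.2)%g;
  mul2_ex : exists C : alg (gT2 * gT2)%type gT2,
    (time C <= unit_cost)%N /\ forall x, run C x = dret R (x.1 * x.2)%g;
  inv2_ex : exists C : alg gT2 gT2,
    (time C <= unit_cost)%N /\ forall x, run C x = dret R (x^-1)%g;
  pairing_ex : exists C : alg (gT1 * gT1)%type gT2,
    (time C <= unit_cost)%N /\ forall x, run C x = dret R (e x.1 x.2)
}.

Arguments alg {R gT1 gT2 p e}.
Arguments run {R gT1 gT2 p e} _ {I O}.
Arguments time {R gT1 gT2 p e} _ {I O}.
Arguments unit_cost {R gT1 gT2 p e}.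

Section Security.
Variables (R : realFieldType) (gT1 gT2 : finGroupType) (p : nat)
  (e : gT1 -> gT1 -> gT2) (M : comp_model R p e).

Definition gens1 : {set gT1} := [set g : gT1 | generator [set: gT1] g].

Definition cdh_success (A : alg M (gT1 * gT1 * gT1)%type gT1) : R :=
  ((#|gens1| * p ^ 2)%N%:R)^-1 *
  \sum_(g in gens1) \sum_(a < p) \sum_(b < p)
     run M A (g, g ^+ a, g ^+ b)%g (g ^+ (a * b))%g.

Definition CDH_assumption (t : nat) (eps : R) : Prop :=
  forall A : alg M (gT1 * gT1 * gT1)%type gT1, (time M A <= t)%N ->
    cdh_success A < eps.

Definition owp_success (A : alg M (gT1 * gT2)%type gT1) : R :=
  ((#|gens1| * #|gT2|)%N%:R)^-1 *
  \sum_(g in gens1) \sum_(x : gT2) \sum_(y : gT1 | e g y == x) run M A (g, x) y.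

Definition one_way_pairing (t : nat) (eps : R) : Prop :=
  forall A : alg M (gT1 * gT2)%type gT1, (time M A <= t)%N ->
    owp_success A < eps.
End Security.

(* Random self-reduction of CDH to inverting the pairing.  On input
   (g, g^a, g^b) the CDH solver draws k uniformly in Z_p, runs the inverter on
   (g, e(g^a, g^b) e(g, g^k)) = (g, e(g, g^(ab) g^k)) and divides the answer by
   g^k.  For all a, b the point g^(ab) g^k is uniform in G1, so the solver
   succeeds exactly as often as the inverter does on a target e(g, y) with y
   uniform in G1; as |G1| = |G2| this is the inverter's success probability on
   a uniform target in G2.  The solver adds a constant number of unit-cost
   operations to the running time of the inverter. *)

From HB Require Import structures.
From mathcomp Require Import all_boot all_order all_algebra all_fingroup all_solvable.
From mathcomp Require Import zify.
Set Implicit Arguments. Unset Strict Implicit. Unset Printing Implicit Defensive.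
Import Order.TTheory GRing.Theory Num.Theory.
Local Open Scope ring_scope.

Section Distributions.
Variable R : realFieldType.

Lemma dbind_retl (T U : finType) (x : T) (F : T -> {ffun U -> R}) :
  dbind (dret R x) F = F x.
Proof.
apply/ffunP=> u; rewrite !ffunE (bigD1 x) //= big1 => [|t /negbTE ntx].
  by rewrite ffunE eqxx mul1r addr0.
by rewrite ffunE ntx mul0r.
Qed.

Lemma eq_dbind (T U : finType) (d : {ffun T -> R}) (F G : T -> {ffun U -> R}) :
  (forall t, F t = G t) -> dbind d F = dbind d G.
Proof. by move=> FG; apply/ffunP=> u; rewrite !ffunE; apply: eq_bigr=> t _; rewrite FG. Qed.

Lemma dbindA (T U V : finType) (d : {ffun T -> R}) (F : T -> {ffun U -> R})
    (G : U -> {ffun V -> R}) :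
  dbind (dbind d F) G = dbind d (fun t => dbind (F t) G).
Proof.
apply/ffunP=> v; rewrite !ffunE.
under eq_bigr do rewrite ffunE mulr_suml.
rewrite exchange_big /=; apply: eq_bigr=> t _.
by rewrite ffunE mulr_sumr; apply: eq_bigr=> u _; rewrite mulrA.
Qed.

Lemma dbind_ret_bij (T U : finType) (d : {ffun T -> R}) (h : T -> U) (h' : U -> T) :
  cancel h h' -> cancel h' h -> forall u, dbind d (fun t => dret R (h t)) u = d (h' u).
Proof.
move=> hK h'K u; rewrite ffunE (bigD1 (h' u)) //= ffunE h'K eqxx mulr1.
rewrite big1 ?addr0 // => t ne_t; rewrite ffunE.
case: eqP => [u_ht|_]; last by rewrite mulr0.
by rewrite u_ht hK eqxx in ne_t.
Qed.

End Distributions.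

Lemma big_cycle_expg (V : nmodType) (gT : finGroupType) (x : gT) (F : gT -> V) :
  \sum_(k < #[x]%g) F (x ^+ k)%g = \sum_(y in <[x]>%g) F y.
Proof.
pose expx (k : 'I_#[x]%g) := (x ^+ k)%g.
have inj_expx : {in setT &, injective expx}.
  by move=> i j _ _ /eqP; rewrite eq_expg_mod_order !modn_small // => /eqP/val_inj.
have im_expx : expx @: setT = <[x]>%g.
  apply/eqP; rewrite eqEcard card_in_imset // cardsT card_ord leqnn andbT.
  by apply/subsetP=> _ /imsetP[k _ ->]; apply: mem_cycle.
by rewrite -im_expx big_imset //; apply: eq_bigl => k; rewrite inE.
Qed.

Section Reduction.
Variables (R : realFieldType) (gT1 gT2 : finGroupType) (p : nat)
  (e : gT1 -> gT1 -> gT2) (M : comp_model R p e).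
Local Notation uc := (unit_cost M).

Definition realizable (I O : finType) (D : I -> {ffun O -> R}) (n : nat) :=
  exists A : alg M I O, (time M A <= n)%N /\ forall i, run M A i = D i.

Definition computable (I O : finType) (f : I -> O) (n : nat) :=
  realizable (fun i => dret R (f i)) (n * uc).

Lemma realizableW (I O : finType) (D : I -> {ffun O -> R}) n m :
  (n <= m)%N -> realizable D n -> realizable D m.
Proof. by move=> le_nm [A [tA rA]]; exists A; split; first exact: leq_trans le_nm. Qed.

Lemma eq_realizable (I O : finType) (D D' : I -> {ffun O -> R}) n :
  (forall i, D i = D' i) -> realizable D n -> realizable D' n.
Proof. by move=> DD' [A [tA rA]]; exists A; split=> // i; rewrite rA. Qed.

Lemma realizable_alg (I O : finType) (A : alg M I O) : realizable (run M A) (time M A).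
Proof. by exists A. Qed.

Lemma realizable_bind (I J K : finType) (D : I -> {ffun J -> R})
    (F : J -> {ffun K -> R}) n m :
  realizable D n -> realizable F m -> realizable (fun i => dbind (D i) F) (n + m + uc).
Proof.
case=> A [tA rA] [B [tB rB]]; have [C [tC rC]] := comp_ex A B.
exists C; split; first by apply: leq_trans tC _; rewrite leq_add2r leq_add.
by move=> i; rewrite rC rA; apply: eq_dbind.
Qed.

Lemma realizable_pair (I J K : finType) (D : I -> {ffun J -> R})
    (E : I -> {ffun K -> R}) n m :
  realizable D n -> realizable E m ->
  realizable (fun i => dbind (D i) (fun j => dbind (E i) (fun k => dret R (j, k))))
    (n + m + uc).
Proof.
case=> A [tA rA] [B [tB rB]]; have [C [tC rC]] := pair_ex A B.
exists C; split; first by apply: leq_trans tC _; rewrite leq_add2r leq_add.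
by move=> i; rewrite rC rA rB.
Qed.

Lemma realizable_unif (I : finType) : realizable (fun _ : I => dunif R 'I_p) uc.
Proof. exact: samp_ex. Qed.

Lemma computable_unit (I O : finType) (f : I -> O) :
  realizable (fun i => dret R (f i)) uc -> computable f 1.
Proof. by apply: realizableW; rewrite mul1n. Qed.

Lemma computable_comp (I J K : finType) (f : I -> J) (h : J -> K) n m :
  computable f n -> computable h m -> computable (fun i => h (f i)) (n + m + 1).
Proof.
move=> cf ch; rewrite /computable !mulnDl mul1n.
by apply: eq_realizable (realizable_bind cf ch) => i; rewrite dbind_retl.
Qed.

Lemma computable_pair (I J K : finType) (f : I -> J) (h : I -> K) n m :
  computable f n -> computable h m -> computable (fun i => (f i, h i)) (n + m + 1).
Proof.
move=> cf ch; rewrite /computable !mulnDl mul1n.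
by apply: eq_realizable (realizable_pair cf ch) => i; rewrite !dbind_retl.
Qed.

Lemma computable_fst (I J : finType) : computable (fun x : I * J => x.1) 1.
Proof. exact/computable_unit/fst_ex. Qed.

Lemma computable_snd (I J : finType) : computable (fun x : I * J => x.2) 1.
Proof. exact/computable_unit/snd_ex. Qed.

Lemma computable_id (I J : finType) : computable (fun x : I * J => x) 3.
Proof.
apply: eq_realizable (computable_pair (computable_fst I J) (computable_snd I J)).
by case.
Qed.

Lemma computable_mul1 : computable (fun x : gT1 * gT1 => x.1 * x.2)%g 1.
Proof. exact/computable_unit/mul1_ex. Qed.

Lemma computable_inv1 : computable (fun x : gT1 => x^-1)%g 1.
Proof. exact/computable_unit/inv1_ex. Qed.

Lemma computable_exp1 : computable (fun x : gT1 * 'I_p => x.1 ^+ x.2)%g 1.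
Proof. exact/computable_unit/exp1_ex. Qed.

Lemma computable_mul2 : computable (fun x : gT2 * gT2 => x.1 * x.2)%g 1.
Proof. exact/computable_unit/mul2_ex. Qed.

Lemma computable_pairing : computable (fun x : gT1 * gT1 => e x.1 x.2) 1.
Proof. exact/computable_unit/pairing_ex. Qed.

Lemma realizable_on_fst (I J K : finType) (D : I -> {ffun J -> R}) n :
  realizable D n ->
  realizable (fun w : I * K => dbind (D w.1) (fun j => dret R (j, w.2))) (n + 4 * uc).
Proof.
move=> rD; apply: (@realizableW _ _ _ (1 * uc + n + uc + 1 * uc + uc)); first lia.
apply: eq_realizable
  (realizable_pair (realizable_bind (computable_fst I K) rD) (computable_snd I K)) => w.
by rewrite dbind_retl; apply: eq_dbind => j; rewrite dbind_retl.
Qed.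

Lemma computable_blind :
  computable (fun z : gT1 * gT1 * gT1 * 'I_p =>
    let: (g, u, v, k) := z in ((g, e u v * e g (g ^+ k)), g ^+ k)%g) 47.
Proof.
pose I := (gT1 * gT1 * gT1 * 'I_p)%type.
have g_ : computable (fun z : I => z.1.1.1) _ :=
  computable_comp (computable_comp (computable_fst _ _) (computable_fst _ _))
    (computable_fst _ _).
have u_ : computable (fun z : I => z.1.1.2) _ :=
  computable_comp (computable_comp (computable_fst _ _) (computable_fst _ _))
    (computable_snd _ _).
have v_ : computable (fun z : I => z.1.2) _ :=
  computable_comp (computable_fst _ _) (computable_snd _ _).
have gk_ := computable_comp (computable_pair g_ (computable_snd _ _)) computable_exp1.
have x_ := computable_comp
  (computable_pair (computable_comp (computable_pair u_ v_) computable_pairing)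
                   (computable_comp (computable_pair g_ gk_) computable_pairing))
  computable_mul2.
by apply: eq_realizable (computable_pair (computable_pair g_ x_) gk_) => -[[[]]].
Qed.

Definition cdh_of_owp (A : alg M (gT1 * gT2)%type gT1) (i : gT1 * gT1 * gT1) :
    {ffun gT1 -> R} :=
  let: (g, u, v) := i in
  dbind (dunif R 'I_p) (fun k : 'I_p =>
    dbind (run M A (g, e u v * e g (g ^+ k))%g) (fun y => dret R (y * (g ^+ k)^-1)%g)).

Lemma realizable_cdh_of_owp (A : alg M (gT1 * gT2)%type gT1) :
  realizable (cdh_of_owp A) (time M A + 66 * uc).
Proof.
have sample : realizable
    (fun i : gT1 * gT1 * gT1 => dbind (dunif R 'I_p) (fun k => dret R (i, k)))
    (3 * uc + uc + uc).
  apply: eq_realizable (realizable_pair (computable_id _ _) (realizable_unif _)) => i.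
  by rewrite dbind_retl.
have unblind := computable_comp
  (computable_pair (computable_fst _ _) (computable_comp (computable_snd _ _) computable_inv1))
  computable_mul1.
have := realizable_bind sample (realizable_bind computable_blind
          (realizable_bind (realizable_on_fst gT1 (realizable_alg A)) unblind)).
move/eq_realizable => /(_ (cdh_of_owp A)) rB; apply: realizableW (rB _) => [|[[g u] v]].
  lia.
rewrite dbindA; apply: eq_dbind => k; rewrite dbind_retl /= dbind_retl dbindA.
by apply: eq_dbind => y; rewrite dbind_retl.
Qed.

Lemma cdh_of_owpE (A : alg M (gT1 * gT2)%type gT1) (g u v o : gT1) :
  cdh_of_owp A (g, u, v) o =
  (p%:R)^-1 * \sum_(k < p) run M A (g, e u v * e g (g ^+ k))%g (o * g ^+ k)%g.
Proof.
rewrite ffunE mulr_sumr; apply: eq_bigr => k _.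
by rewrite ffunE card_ord (dbind_ret_bij _ (mulgKV _) (mulgK _)).
Qed.

Lemma owp_successE (A : alg M (gT1 * gT2)%type gT1) :
  owp_success A = ((#|gens1 gT1| * #|gT2|)%N%:R)^-1 *
                  \sum_(g in gens1 gT1) \sum_(y : gT1) run M A (g, e g y) y.
Proof.
congr (_ * _); apply: eq_bigr => g _.
by rewrite (exchange_big_dep xpredT) //=; apply: eq_bigr => y _; rewrite (big_pred1 (e g y)).
Qed.

Lemma pairing_expgM (g : gT1) (a b k : nat) : pairing_bilinear e ->
  (e (g ^+ a) (g ^+ b) * e g (g ^+ k) = e g (g ^+ (a * b) * g ^+ k))%g.
Proof.
move=> bil; have e_gX n : e g (g ^+ n)%g = (e g g ^+ n)%g.
  by rewrite -{1}(expg1 g) bil mul1n.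
by rewrite bil -expgD !e_gX expgD.
Qed.

Lemma cdh_success_cdh_of_owp (A : alg M (gT1 * gT2)%type gT1)
    (B : alg M (gT1 * gT1 * gT1)%type gT1) :
  #|gT1| = p -> #|gT2| = p -> pairing_bilinear e ->
  (forall i, run M B i = cdh_of_owp A i) -> cdh_success B = owp_success A.
Proof.
move=> card_gT1 card_gT2 bil runB.
have p_neq0 : (p%:R : R) != 0.
  by rewrite pnatr_eq0 -lt0n -card_gT1; apply/card_gt0P; exists 1%g.
pose S g := \sum_(y : gT1) run M A (g, e g y) y.
have cdh_at g : g \in gens1 gT1 ->
    \sum_(a < p) \sum_(b < p) run M B (g, g ^+ a, g ^+ b)%g (g ^+ (a * b))%g = p%:R * S g.
  rewrite inE => /eqP gen_g.
  have sum_expg (F : gT1 -> R) : \sum_(k < p) F (g ^+ k)%g = \sum_y F y.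
    rewrite -card_gT1 -cardsT gen_g big_cycle_expg -gen_g.
    by apply: eq_bigl => y; rewrite inE.
  transitivity (\sum_(a < p) \sum_(b < p) ((p%:R)^-1 * S g)).
    apply: eq_bigr => a _; apply: eq_bigr => b _; rewrite runB cdh_of_owpE.
    under eq_bigr do rewrite pairing_expgM //.
    rewrite (sum_expg (fun y => run M A (g, e g (g ^+ (a * b) * y)) (g ^+ (a * b) * y))%g).
    by congr (_ * _); rewrite [RHS](reindex_inj (mulgI (g ^+ (a * b))%g)).
  rewrite !sumr_const card_ord -mulrnA -[_ *+ (p * p)]mulr_natr natrM.
  by rewrite mulrC mulrA mulfK.
rewrite owp_successE /cdh_success card_gT2 (eq_bigr _ cdh_at) -mulr_sumr mulrA.
by congr (_ * _); rewrite !natrM !invfM -!mulrA mulVf ?mulr1.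
Qed.

End Reduction.

Theorem propositionC1 :
  exists C : nat,
  forall (R : realFieldType) (gT1 gT2 : finGroupType) (p : nat)
         (e : gT1 -> gT1 -> gT2),
    prime p -> #|gT1| = p -> #|gT2| = p ->
    pairing_bilinear e -> pairing_nondegenerate e ->
    forall (M : comp_model R p e) (t : nat) (eps : R),
      CDH_assumption M t eps ->
      forall t' : nat, (t' + C * unit_cost M <= t)%N ->
        one_way_pairing M t' eps.
Proof.
exists 66 => R gT1 gT2 p e _ card_gT1 card_gT2 bil _ M t eps cdh t' le_t A tA.
have [B [tB runB]] := realizable_cdh_of_owp A.
rewrite -(cdh_success_cdh_of_owp card_gT1 card_gT2 bil runB); apply: cdh.
by apply: leq_trans tB _; rewrite (leq_trans _ le_t) // leq_add2r.
Qed.
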